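(* Suppose Assumptions (A1), (A2) and (SC) hold. Then for every $x\in\mathcal{X}$ and $t>0$, $$\|y_t^*(x)-y^*(x)\|\le\sqrt{\frac{2}{\mu_g}kt}.$$
   Context: Let $f,g,h_1,\dots,h_k:\mathbb{R}^n\times\mathbb{R}^m\to\mathbb{R}$ and $\mathcal{X}\subseteq\mathbb{R}^n$. For $x\in\mathcal{X}$ let $\mathcal{Y}(x)=\{y: h_i(x,y)\le 0,\ i=1,\dots,k\}$ and $y^*(x)=\arg\min_{y\in\mathcal{Y}(x)} g(x,y)$. For $t>0$ let $\widetilde g_t(x,y)=g(x,y)-t\sum_{i=1}^k\log(-h_i(x,y))$ (defined when all $h_i(x,y)<0$) and $y_t^*(x)=\arg\min_y\widetilde g_t(x,y)$. Assumptions: (A1) $f$ once and $g,h_i$ twice continuously differentiable; (A2) $\mathcal{X}$ convex and compact and for every $x\in\mathcal{X}$ there is $y$ with $h_i(x,y)<0$ for all $i$; (SC) for every $x\in\mathcal{X}$, $g(x,\cdot)$ is $\mu_g$-strongly convex and each $h_i(x,\cdot)$ is convex. *)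

From HB Require Import structures.
From mathcomp Require Import all_boot all_order all_algebra.
From mathcomp Require Import all_classical all_reals all_analysis.
Set Implicit Arguments. Unset Strict Implicit. Unset Printing Implicit Defensive.
Import Order.TTheory GRing.Theory Num.Theory.
Import numFieldNormedType.Exports.
Local Open Scope classical_set_scope.
Local Open Scope ring_scope.

Section Defs.
Variable R : realType.

Definition enorm (m : nat) (v : 'rV[R]_m) : R :=
  Num.sqrt (\sum_(i < m) (v ord0 i) ^+ 2).

(* Continuously differentiable (finite-dimensional domain): differentiable
   everywhere and every directional derivative p |-> dF(p) v is continuous. *)
Definition C1 (V : normedModType R) (F : V -> R) : Prop :=
  (forall p, differentiable F p) /\ (forall v : V, continuous (fun p => 'd F p v)).

Definition C2 (V : normedModType R) (F : V -> R) : Prop :=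
  C1 F /\ (forall v : V, C1 (fun p => 'd F p v)).

Definition uncurry2 (n m : nat) (F : 'rV[R]_n -> 'rV[R]_m -> R)
  : 'rV[R]_n * 'rV[R]_m -> R := fun p => F p.1 p.2.

Definition convex_setR (n : nat) (X : set 'rV[R]_n) : Prop :=
  forall a b, X a -> X b -> forall l : R, 0 <= l <= 1 -> X (l *: a + (1 - l) *: b).

Definition convex_funR (m : nat) (G : 'rV[R]_m -> R) : Prop :=
  forall a b (l : R), 0 <= l <= 1 ->
    G (l *: a + (1 - l) *: b) <= l * G a + (1 - l) * G b.

Definition strongly_convex (m : nat) (mu : R) (G : 'rV[R]_m -> R) : Prop :=
  forall a b (l : R), 0 <= l <= 1 ->
    G (l *: a + (1 - l) *: b) <=
      l * G a + (1 - l) * G b - mu / 2 * l * (1 - l) * (enorm (a - b)) ^+ 2.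

Definition feas (n m k : nat) (h : 'I_k -> 'rV[R]_n -> 'rV[R]_m -> R) x : set 'rV[R]_m :=
  [set y | forall i, h i x y <= 0].
Definition sfeas (n m k : nat) (h : 'I_k -> 'rV[R]_n -> 'rV[R]_m -> R) x : set 'rV[R]_m :=
  [set y | forall i, h i x y < 0].

(* log-barrier function g~_t (meaningful on the strictly feasible set) *)
Definition gbar (n m k : nat) (g : 'rV[R]_n -> 'rV[R]_m -> R)
  (h : 'I_k -> 'rV[R]_n -> 'rV[R]_m -> R) (t : R) x y : R :=
  g x y - t * \sum_(i < k) ln (- h i x y).

Definition is_argmin (m : nat) (G : 'rV[R]_m -> R) (S : set 'rV[R]_m) y : Prop :=
  S y /\ forall z, S z -> G y <= G z.

End Defs.

From HB Require Import structures.
From mathcomp Require Import all_boot all_order all_algebra.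
From mathcomp Require Import all_classical all_reals all_analysis.
From mathcomp Require Import ring lra.
Import Order.TTheory GRing.Theory Num.Theory.
Import numFieldNormedType.Exports.
Set Implicit Arguments. Unset Strict Implicit. Unset Printing Implicit Defensive.
Local Open Scope classical_set_scope.
Local Open Scope ring_scope.

(* Compare both minimizers with points on the segment between them.
   Strong convexity of g on the segment, with z = yt/4 + 3 ystar/4 feasible for
   the constrained problem, gives g(yt) - g(ystar) >= (3/8) mu |yt - ystar|^2.
   The barrier point w = 3 yt/4 + ystar/4 is strictly feasible, and convexity of
   the h_i gives -h_i(w) >= (3/4)(-h_i(yt)); so optimality of yt for the barrier
   problem yields g(yt) <= g(w) - t k ln(3/4) <= g(w) + t k / 3.  Inserting the
   strong convexity bound for g(w) and the gap above leaves
   (3/16) mu |yt - ystar|^2 <= t k / 3. *)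

Lemma one_sub_inv_le_ln (R : realType) (x : R) : 0 < x -> 1 - x^-1 <= ln x.
Proof.
move=> x_gt0; have xV_gt0 : 0 < x^-1 by rewrite invr_gt0.
have : ln (1 + (x^-1 - 1)) <= x^-1 - 1 by apply: le_ln1Dx; lra.
by rewrite addrC subrK lnV ?posrE //; lra.
Qed.

Lemma convex_funR_comb_le (R : realType) (m : nat) (H : 'rV[R]_m -> R) a b l :
  convex_funR H -> H b <= 0 -> 0 <= l <= 1 ->
  H (l *: a + (1 - l) *: b) <= l * H a.
Proof.
move=> H_cvx Hb_le0 l01; apply: le_trans (H_cvx a b l l01) _.
by rewrite gerDl mulr_ge0_le0 // subr_ge0; case/andP: l01.
Qed.

Lemma argmin_strongly_convex_gap (R : realType) (m : nat) (mu : R)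
    (G : 'rV[R]_m -> R) (S : set 'rV[R]_m) a b l :
  strongly_convex mu G -> is_argmin G S b -> S (l *: a + (1 - l) *: b) ->
  0 < l <= 1 -> mu / 2 * (1 - l) * enorm (a - b) ^+ 2 <= G a - G b.
Proof.
move=> G_sc [_ b_min] S_comb /andP[l_gt0 l_le1].
set D := mu / 2 * (1 - l) * enorm (a - b) ^+ 2.
have Gb_le : G b <= l * G a + (1 - l) * G b - l * D.
  apply: le_trans (b_min _ S_comb) _.
  have -> : l * D = mu / 2 * l * (1 - l) * enorm (a - b) ^+ 2 by rewrite /D; ring.
  by apply: G_sc; rewrite ltW.
rewrite -(ler_pM2l l_gt0); lra.
Qed.

Section LogBarrier.
Variables (R : realType) (n m k : nat) (h : 'I_k -> 'rV[R]_n -> 'rV[R]_m -> R).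
Variable (x : 'rV[R]_n).
Hypothesis h_cvx : forall i, convex_funR (h i x).

Lemma sfeas_feas : sfeas h x `<=` feas h x.
Proof. by move=> y y_sfeas i; apply/ltW/y_sfeas. Qed.

Lemma sfeas_comb a b l : sfeas h x a -> feas h x b -> 0 < l <= 1 ->
  sfeas h x (l *: a + (1 - l) *: b).
Proof.
move=> a_sfeas b_feas /andP[l_gt0 l_le1] i.
apply: le_lt_trans (convex_funR_comb_le a (h_cvx i) (b_feas i) _) _.
  by rewrite ltW.
by rewrite pmulr_rlt0.
Qed.

Lemma sum_ln_barrier_comb a b l : sfeas h x a -> feas h x b -> 0 < l <= 1 ->
  k%:R * ln l + \sum_(i < k) ln (- h i x a) <=
  \sum_(i < k) ln (- h i x (l *: a + (1 - l) *: b)).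
Proof.
move=> a_sfeas b_feas l01; have /andP[l_gt0 l_le1] := l01.
have -> : k%:R * ln l = \sum_(i < k) ln l by rewrite sumr_const card_ord mulr_natl.
rewrite -big_split /=.
apply: ler_sum => i _.
have Nha_gt0 : 0 < - h i x a by rewrite oppr_gt0.
rewrite -lnM ?posrE // ler_ln ?posrE ?mulr_gt0 ?oppr_gt0 //.
  by rewrite mulrN lerNr opprK convex_funR_comb_le // ltW.
exact: sfeas_comb.
Qed.

Lemma barrier_argmin_le (g : 'rV[R]_n -> 'rV[R]_m -> R) t a b l :
  0 < t -> is_argmin (gbar g h t x) (sfeas h x) a -> feas h x b -> 0 < l <= 1 ->
  g x a <= g x (l *: a + (1 - l) *: b) - t * (k%:R * ln l).
Proof.
move=> t_gt0 [a_sfeas a_min] b_feas l01.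
have := a_min _ (sfeas_comb a_sfeas b_feas l01); rewrite /gbar.
have := ler_wpM2l (ltW t_gt0) (sum_ln_barrier_comb a_sfeas b_feas l01).
lra.
Qed.

End LogBarrier.

Lemma le_sqrt_div_of_mul_sqr_le (R : rcfType) (d c mu : R) :
  0 <= d -> 0 < mu -> mu * d ^+ 2 <= c -> d <= Num.sqrt (c / mu).
Proof.
move=> d_ge0 mu_gt0 le_c.
have c_ge0 : 0 <= c by apply: le_trans _ le_c; rewrite mulr_ge0 ?sqr_ge0 ?ltW.
rewrite -(ger0_norm d_ge0) -sqrtr_sqr ler_sqrt; last by rewrite divr_ge0 // ltW.
by rewrite ler_pdivlMr // mulrC.
Qed.

Theorem lemma6 (R : realType) (n m k : nat)
  (f g : 'rV[R]_n -> 'rV[R]_m -> R) (h : 'I_k -> 'rV[R]_n -> 'rV[R]_m -> R)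
  (X : set 'rV[R]_n) (mu_g : R) :
  (* (A1) *)
  C1 (uncurry2 f) -> C2 (uncurry2 g) -> (forall i, C2 (uncurry2 (h i))) ->
  (* (A2) *)
  convex_setR X -> compact X ->
  (forall x, X x -> exists y, forall i, h i x y < 0) ->
  (* (SC) *)
  0 < mu_g ->
  (forall x, X x -> strongly_convex mu_g (g x)) ->
  (forall x, X x -> forall i, convex_funR (h i x)) ->
  forall x, X x -> forall t : R, 0 < t ->
  forall ystar yt : 'rV[R]_m,
    is_argmin (g x) (feas h x) ystar ->
    is_argmin (gbar g h t x) (sfeas h x) yt ->
    enorm (yt - ystar) <= Num.sqrt (2 / mu_g * k%:R * t).
Proof.
move=> _ _ _ _ _ _ mu_gt0 g_sc h_cvx x Xx t t_gt0 ystar yt ystar_min yt_min.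
have [[ystar_feas _] [yt_sfeas _]] := conj ystar_min yt_min.
have l14 : 0 < (1 / 4 : R) <= 1 by apply/andP; split; lra.
have l34 : 0 < (3 / 4 : R) <= 1 by apply/andP; split; lra.
have gap := argmin_strongly_convex_gap (g_sc x Xx) ystar_min
  (sfeas_feas (sfeas_comb (h_cvx x Xx) yt_sfeas ystar_feas l14)) l14.
have barrier := barrier_argmin_le (h_cvx x Xx) t_gt0 yt_min ystar_feas l34.
have g_w : g x (3 / 4 *: yt + (1 - 3 / 4) *: ystar) <=
    3 / 4 * g x yt + (1 - 3 / 4) * g x ystar
    - mu_g / 2 * (3 / 4) * (1 - 3 / 4) * enorm (yt - ystar) ^+ 2.
  by apply: g_sc => //; case/andP: l34 => /ltW -> ->.
have ln34 : - (1 / 3) <= ln (3 / 4 : R).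
  by have := @one_sub_inv_le_ln R (3 / 4) (divr_gt0 _ _); rewrite invf_div; lra.
have tk_ge0 : 0 <= t * k%:R by rewrite mulr_ge0 // ltW.
have tk_ln34 := ler_wpM2l tk_ge0 ln34.
have -> : 2 / mu_g * k%:R * t = 2 * k%:R * t / mu_g by ring.
by apply: le_sqrt_div_of_mul_sqr_le; rewrite ?sqrtr_ge0 //; lra.
Qed.
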